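(* Let $k\in\mathbb{N}$ and let $v=(v_0,\ldots,v_{2k})\in\mathbb{R}^{2k+1}$ be a singular sequence. Then the following statements are equivalent: (1) $v$ is positively recursively generated and $\varphi_0\neq 0$; (2) $v$ is negatively recursively generated and $\psi_{r'-1}\neq 0$, where $r'=\operatorname{rank} v^{(\mathrm{rev})}$; (3) $v$ is recursively generated; (4) $v$ is recursively generated, $\operatorname{rank} v=\operatorname{rank} v^{(\mathrm{rev})}=:r$, $\varphi_0\neq 0$ and $$(\psi_0,\psi_1,\ldots,\psi_{r-2},\psi_{r-1})=\left(-\frac{\varphi_1}{\varphi_0},-\frac{\varphi_2}{\varphi_0},\ldots,-\frac{\varphi_{r-1}}{\varphi_0},\frac{1}{\varphi_0}\right).$$
   Context: For $v=(v_0,\ldots,v_{2k})\in\mathbb{R}^{2k+1}$, $A_v=(v_{i+j})_{i,j=0}^k$ is the associated Hankel matrix, with columns $\mathbf{v_0},\ldots,\mathbf{v_k}$ ($\mathbf{v_j}=(v_{j+\ell})_{\ell=0}^k$). For $0\le m\le k$, $A_v(m)=(v_{i+j})_{i,j=0}^m$ is the upper left $(m+1)\times(m+1)$ corner and $A_v[m]=(v_{i+j})_{i,j=k-m}^k$ the lower right $(m+1)\times(m+1)$ corner. The rank of $v$ is $\operatorname{rank} v=k+1$ if $A_v$ is nonsingular, and otherwise $\operatorname{rank} v=\min\{i:\mathbf{v_i}\in\operatorname{span}\{\mathbf{v_0},\ldots,\mathbf{v_{i-1}}\}\}$; $v$ is singular if $\operatorname{rank} v<k+1$. The reversed sequence is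 $v^{(\mathrm{rev})}=(v_{2k},\ldots,v_0)$. $v$ is positively recursively generated (prg) if, with $r=\operatorname{rank} v$: $A_v(r-1)\succ 0$, and if $r<k+1$, then setting $(\varphi_0,\ldots,\varphi_{r-1})^T:=A_v(r-1)^{-1}(v_r,\ldots,v_{2r-1})^T$, one has $v_j=\varphi_0v_{j-r}+\cdots+\varphi_{r-1}v_{j-1}$ for $j=r,\ldots,2k$. $v$ is negatively recursively generated (nrg) if, with $r=\operatorname{rank} v^{(\mathrm{rev})}$: $A_v[r-1]\succ 0$, and if $r<k+1$, then setting $(\psi_0,\ldots,\psi_{r-1})^T:=A_v[r-1]^{-1}(v_{2k-2r+1},\ldots,v_{2k-r})^T$, one has $v_{2k-r-j}=\psi_0v_{2k-r+1-j}+\cdots+\psi_{r-1}v_{2k-j}$ for $j=0,\ldots,2k-r$. $v$ is recursively generated (rg) if it is both prg and nrg. *)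

(* Sequences v = (v_0,...,v_{2k}) are (2k+1)-tuples over a real
   field; v`_i = nth 0 v i. *)
From mathcomp Require Import all_boot all_order all_algebra.
Set Implicit Arguments. Unset Strict Implicit. Unset Printing Implicit Defensive.
Import Order.TTheory GRing.Theory Num.Theory.
Local Open Scope ring_scope.

Section Hankel.
Variable R : realFieldType.
Implicit Types (v : seq R) (k m : nat).

Definition hankel k v : 'M[R]_k.+1 := \matrix_(i, j) v`_(i + j).

Definition hcorner_ul v m : 'M[R]_m.+1 := \matrix_(i, j) v`_(i + j).

Definition hcorner_lr k v m : 'M[R]_m.+1 :=
  \matrix_(i, j) v`_((k - m + i) + (k - m + j)).

(* the column v_j = (v_{j+l})_{l=0}^k of A_v, written as a row vector *)
Definition hcol k v j : 'rV[R]_k.+1 := \row_l v`_(j + l).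

(* matrix whose rows are the columns v_0, ..., v_{i-1}; its row space is
   span{v_0,...,v_{i-1}} *)
Definition hcols_before k v i : 'M[R]_(i, k.+1) := \matrix_(m < i) hcol k v m.

Definition hrank k v : nat :=
  if hankel k v \in unitmx then k.+1
  else find (fun i => (hcol k v i <= hcols_before k v i)%MS) (iota 0 k.+1).

Definition posdef n (M : 'M[R]_n) : Prop :=
  M^T = M /\ forall x : 'cV[R]_n, x != 0 -> 0 < (x^T *m M *m x) ord0 ord0.

Definition phi k v (i : nat) : R :=
  let r := hrank k v in
  let b : 'cV[R]_(r.-1.+1) := \col_l v`_(r + l) in
  if (i < r)%N then (invmx (hcorner_ul v r.-1) *m b) (inord i) ord0 else 0.

Definition psi k v (i : nat) : R :=
  let r := hrank k (rev v) in
  let b : 'cV[R]_(r.-1.+1) := \col_l v`_((2 * k).+1 + l - 2 * r) in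
  if (i < r)%N then (invmx (hcorner_lr k v r.-1) *m b) (inord i) ord0 else 0.

Definition prg k v : Prop :=
  let r := hrank k v in
  (0 < r)%N /\ posdef (hcorner_ul v r.-1) /\
  ((r < k.+1)%N -> forall j : nat, (r <= j <= 2 * k)%N ->
     v`_j = \sum_(i < r) phi k v i * v`_(j - r + i)).

Definition nrg k v : Prop :=
  let r := hrank k (rev v) in
  (0 < r)%N /\ posdef (hcorner_lr k v r.-1) /\
  ((r < k.+1)%N -> forall j : nat, (j <= 2 * k - r)%N ->
     v`_(2 * k - r - j) = \sum_(i < r) psi k v i * v`_((2 * k).+1 - r - j + i)).

Definition rg k v : Prop := prg k v /\ nrg k v.

End Hankel.

(* Write r = rank v and r' = rank v^(rev).  A recurrence of order q <= n
   gives a kernel vector of every (n+1) x (n+1) Hankel block it spans; hence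
   a positive definite A_v(r-1) together with a recurrence of order r forces
   rank v = r and identifies the coefficients with the phi_i.
   If phi_0 <> 0, the recurrence can be solved for its first term, so v^(rev)
   obeys the recurrence with coefficients
   (1/phi_0, -phi_(r-1)/phi_0, ..., -phi_1/phi_0).  Moreover the companion
   matrix C of phi is invertible and the r x r Hankel blocks H_s = (v_(s+i+j))
   satisfy H_(s+2) = C H_s C^T, so positive definiteness moves from A_v(r-1)
   to A_v[r-1].  As reversal exchanges prg and nrg (and phi with the reversed
   psi), this gives (1) => (4), and (2) => (3) by applying it to v^(rev).
   If v is rg, the recurrence of v^(rev) (of order r') against the positive
   definite A_v(r-1) shows r <= r', and then phi_0 = 0 would leave v with a
   recurrence of order r - 1 < r', against the positive definite A_v[r'-1]. *)

From mathcomp Require Import all_boot all_order all_algebra.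
From mathcomp Require Import perm zify.
Set Implicit Arguments. Unset Strict Implicit. Unset Printing Implicit Defensive.
Import Order.TTheory GRing.Theory Num.Theory.
Local Open Scope ring_scope.

Section PositiveDefinite.
Variable R : realFieldType.

Lemma ker0_unitmx n (M : 'M[R]_n) :
  (forall x : 'cV_n, M *m x = 0 -> x = 0) -> M \in unitmx.
Proof.
move=> ker0; rewrite unitmxE unitfE -det_tr; apply/det0P => -[u u_neq0].
move/(congr1 trmx); rewrite trmx_mul trmxK trmx0 => /ker0/(congr1 trmx).
by rewrite trmxK trmx0 => u0; rewrite u0 eqxx in u_neq0.
Qed.

Lemma posdef_ker0 n (M : 'M[R]_n) (x : 'cV_n) : posdef M -> M *m x = 0 -> x = 0.
Proof.
case=> _ pos Mx; apply/eqP/negPn/negP => /pos.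
by rewrite -mulmxA Mx mulmx0 mxE ltxx.
Qed.

Lemma posdef_unitmx n (M : 'M[R]_n) : posdef M -> M \in unitmx.
Proof. by move=> P; apply: ker0_unitmx => x; apply: posdef_ker0. Qed.

Lemma posdef_congr n (M Q : 'M[R]_n) :
  posdef M -> Q \in unitmx -> posdef (Q *m M *m Q^T).
Proof.
case=> M_sym M_pos Q_unit; split; first by rewrite !trmx_mul trmxK M_sym mulmxA.
move=> x x_neq0.
have -> : x^T *m (Q *m M *m Q^T) *m x = (Q^T *m x)^T *m M *m (Q^T *m x).
  by rewrite trmx_mul trmxK !mulmxA.
apply: M_pos; apply: contra x_neq0 => /eqP Qx0.
have QT_unit : Q^T \in unitmx by rewrite unitmx_tr.
by rewrite -(mulKmx QT_unit x) Qx0 mulmx0.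
Qed.

Definition revmx n (M : 'M[R]_n) : 'M[R]_n :=
  \matrix_(i, j) M (rev_ord i) (rev_ord j).

Lemma revmxK n : involutive (@revmx n).
Proof. by move=> M; apply/matrixP => i j; rewrite !mxE !rev_ordK. Qed.

Lemma posdef_revmx n (M : 'M[R]_n) : posdef M -> posdef (revmx M).
Proof.
move=> P; pose s : 'S_n := perm (@rev_ord_inj n).
have -> : revmx M = perm_mx s *m M *m (perm_mx s)^T.
  rewrite tr_perm_mx -col_permE -row_permE; apply/matrixP=> i j.
  by rewrite !mxE !permE.
by apply: posdef_congr => //; apply: unitmx_perm.
Qed.

Lemma posdef_revmxE n (M : 'M[R]_n) : posdef (revmx M) <-> posdef M.
Proof. by split=> [/posdef_revmx|/posdef_revmx//]; rewrite revmxK. Qed.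

Lemma mul_revmx_rev n (M : 'M[R]_n) (x : 'cV_n) :
  revmx M *m (\col_i x (rev_ord i) 0) = \col_i (M *m x) (rev_ord i) 0.
Proof.
apply/matrixP => i j; rewrite !mxE (reindex_inj (@rev_ord_inj n)) /=.
by apply: eq_bigr => l _; rewrite !mxE !rev_ordK.
Qed.

End PositiveDefinite.

Section Recurrences.
Variable R : realFieldType.
Implicit Types (u : seq R) (c : nat -> R).

Definition lin_rec u q c lo hi : Prop :=
  forall j, (lo <= j <= hi)%N -> u`_j = \sum_(i < q) c i * u`_(j - q + i).

Definition hankel_block u n s : 'M[R]_n.+1 := \matrix_(a, b) u`_(s + (a + b)).

Lemma hcorner_ul_block u n : hcorner_ul u n = hankel_block u n 0.
Proof. by apply/matrixP => a b; rewrite !mxE. Qed.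

Lemma hcorner_lr_block k u n :
  (n <= k)%N -> hcorner_lr k u n = hankel_block u n (2 * (k - n)).
Proof. by move=> nk; apply/matrixP => a b; rewrite !mxE; congr u`_(_); lia. Qed.

Lemma hankel_block_tr u n s : (hankel_block u n s)^T = hankel_block u n s.
Proof. by apply/matrixP => a b; rewrite !mxE [(b + a)%N]addnC. Qed.

Lemma sum_delta N (F : 'I_N -> R) m (lt_mN : (m < N)%N) :
  \sum_(l < N) (((l : nat) == m)%:R * F l) = F (Ordinal lt_mN).
Proof.
rewrite (bigD1 (Ordinal lt_mN)) //= eqxx mul1r big1 ?addr0 // => l.
by rewrite -val_eqE /= => /negbTE ->; rewrite mul0r.
Qed.

Lemma lin_rec_block_nonunit u n s q c :
  (q <= n)%N -> lin_rec u q c (s + q) (s + q + n) ->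
  hankel_block u n s \notin unitmx.
Proof.
move=> qn rec; pose y : 'cV_n.+1 := \col_a ((a < q)%:R * c a - (a == q :> nat)%:R).
have y_neq0 : y != 0.
  apply/eqP => /matrixP/(_ (Ordinal (qn : (q < n.+1)%N)) 0).
  by rewrite !mxE /= ltnn eqxx mul0r sub0r => /eqP; rewrite oppr_eq0 oner_eq0.
have y_ker : hankel_block u n s *m y = 0.
  apply/matrixP => b z; rewrite !mxE.
  under eq_bigr => a _ do rewrite !mxE mulrBr [u`_ _ * _%:R]mulrC.
  rewrite sumrB (sum_delta (fun a : 'I_n.+1 => u`_(s + (b + a))) qn) /=.
  rewrite (rec (s + (b + q))%N); last by have := ltn_ord b; lia.
  apply/eqP; rewrite subr_eq0.
  rewrite (big_ord_widen n.+1 (fun a => c a * u`_(s + (b + q) - q + a)) (leqW qn)).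
  apply/eqP; rewrite [RHS]big_mkcond; apply: eq_bigr => a _ /=.
  case: ifP => _; rewrite ?mul1r ?mul0r ?mulr0 // mulrC.
  by congr (_ * u`_ _); lia.
apply: contra y_neq0 => U; apply/eqP.
by rewrite -(mulKmx U y) y_ker mulmx0.
Qed.

Lemma hcol_depP u k i :
  (hcol k u i <= hcols_before k u i)%MS <-> exists c, lin_rec u i c i (i + k).
Proof.
split=> [/submxP[D /matrixP dep] | [c rec]].
  exists (fun m => if insub m is Some o then D 0 o else 0) => j /andP[ij jik].
  have jk : (j - i < k.+1)%N by lia.
  have := dep 0 (Ordinal jk); rewrite !mxE /= subnKC // => ->.
  by apply: eq_bigr => m _; rewrite !mxE valK addnC.
apply/submxP; exists (\row_m c m); apply/matrixP => a l; rewrite !mxE.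
rewrite rec; last by have := ltn_ord l; lia.
by apply: eq_bigr => m _; rewrite !mxE; congr (_ * u`_ _); lia.
Qed.

Lemma hcol_dep_nonunit u k i N :
  (i <= N <= k)%N -> (hcol k u i <= hcols_before k u i)%MS ->
  hcorner_ul u N \notin unitmx.
Proof.
case/andP=> iN Nk /hcol_depP[c rec]; rewrite hcorner_ul_block.
by apply: (lin_rec_block_nonunit iN) => j /andP[j1 j2]; apply: rec; lia.
Qed.

Lemma hrank_leqS u k : (hrank k u <= k.+1)%N.
Proof.
rewrite /hrank; case: ifP => // _.
by apply: leq_trans (find_size _ _) _; rewrite size_iota.
Qed.

Lemma hrank_eq u k r :
  (0 < r <= k)%N -> posdef (hcorner_ul u r.-1) ->
  (hcol k u r <= hcols_before k u r)%MS -> hrank k u = r.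
Proof.
case/andP=> r_gt0 rk P dep; rewrite /hrank ifF; last first.
  by apply/negbTE/(hcol_dep_nonunit (N := k) _ dep); rewrite rk leqnn.
have -> : iota 0 k.+1 = iota 0 r ++ r :: iota r.+1 (k - r).
  by rewrite -[k.+1](subnKC (leqW rk)) iotaD subSn.
rewrite find_cat size_iota /= dep addn0 ifF //; apply/hasPn => i.
rewrite mem_iota => /andP[_ ir]; apply: contraTN (posdef_unitmx P) => idep.
by apply: (hcol_dep_nonunit (i := i)) => //; lia.
Qed.

Lemma prg_lin_rec u k r c :
  (0 < r <= k)%N -> posdef (hcorner_ul u r.-1) -> lin_rec u r c r (2 * k) ->
  [/\ hrank k u = r, prg k u & forall i, (i < r)%N -> phi k u i = c i].
Proof.
case: r => [|n] // /andP[_ nk] P rec.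
have r_eq : hrank k u = n.+1.
  apply: hrank_eq; rewrite ?nk //; apply/hcol_depP; exists c.
  by move=> j /andP[j1 j2]; apply: rec; lia.
have phi_eq i : (i < n.+1)%N -> phi k u i = c i.
  move=> ilt; rewrite /phi r_eq /= ilt.
  have -> : \col_l u`_(n.+1 + l) = hcorner_ul u n *m \col_l c l.
    apply/matrixP => a z; rewrite !mxE rec; last by have := ltn_ord a; lia.
    by apply: eq_bigr => m _; rewrite !mxE mulrC; congr (u`_ _ * _); lia.
  by rewrite mulKmx ?posdef_unitmx // mxE inordK.
split=> //; rewrite /prg r_eq; split=> //; split=> // _ j jr.
by rewrite rec //; apply: eq_bigr => i _; rewrite phi_eq.
Qed.

End Recurrences.

Section Companion.
Variable R : realFieldType.

Definition companion (c : nat -> R) n : 'M[R]_n.+1 :=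
  \matrix_(a, b) if (a < n)%N then ((b : nat) == a.+1)%:R else c b.

Lemma companion_unitmx (c : nat -> R) n : c 0%N != 0 -> companion c n \in unitmx.
Proof.
move=> c0; apply: ker0_unitmx => x /matrixP Cx.
have x_lift (a : 'I_n) : x (lift ord0 a) 0 = 0.
  have := Cx (widen_ord (leqnSn n) a) 0; rewrite !mxE.
  under eq_bigr do rewrite !mxE /= ltn_ord.
  have a1 : (a.+1 < n.+1)%N by rewrite ltnS.
  rewrite (sum_delta (fun l => x l 0) a1) => <-.
  by congr (x _ 0); apply: val_inj.
have x_ord0 : x ord0 0 = 0.
  have := Cx ord_max 0; rewrite !mxE; under eq_bigr do rewrite !mxE /= ltnn.
  rewrite big_ord_recl big1 ?addr0 => [|l _]; last by rewrite x_lift mulr0.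
  by move/eqP; rewrite mulf_eq0 (negbTE c0) => /eqP.
apply/matrixP => a z; rewrite mxE (ord1 z).
by case: (unliftP ord0 a) => [l ->|->].
Qed.

Variables (v : seq R) (k n : nat) (c : nat -> R).
Hypothesis rec : lin_rec v n.+1 c n.+1 (2 * k).

Lemma hankel_block_succ s :
  (s + 2 * n < 2 * k)%N ->
  hankel_block v n s.+1 = companion c n *m hankel_block v n s.
Proof.
move=> sk; apply/matrixP => a b; rewrite !mxE; under eq_bigr do rewrite !mxE.
case: ltnP => an.
  have a1 : (a.+1 < n.+1)%N by rewrite ltnS.
  rewrite (sum_delta (fun l : 'I_n.+1 => v`_(s + (l + b))) a1) /=.
  by congr v`_(_); lia.
rewrite rec; last by have := ltn_ord a; have := ltn_ord b; lia.
by apply: eq_bigr => l _; congr (_ * v`_ _); have := ltn_ord a; lia.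
Qed.

Lemma hankel_block_posdef t :
  c 0%N != 0 -> posdef (hankel_block v n 0) -> (t + n <= k)%N ->
  posdef (hankel_block v n (2 * t)).
Proof.
move=> c0 P; elim: t => [|t IH] tk; first by rewrite muln0.
have -> : hankel_block v n (2 * t.+1) =
          companion c n *m hankel_block v n (2 * t) *m (companion c n)^T.
  rewrite (_ : 2 * t.+1 = (2 * t).+2)%N; last by lia.
  rewrite hankel_block_succ; last by lia.
  rewrite -hankel_block_tr hankel_block_succ; last by lia.
  by rewrite trmx_mul hankel_block_tr mulmxA.
by apply: posdef_congr; [apply: IH; lia | apply: companion_unitmx].
Qed.

End Companion.

Section Reversal.
Variable R : realFieldType.
Variables (w : seq R) (k : nat).
Hypothesis size_w : size w = (2 * k).+1.

Lemma nth_rev_mirror j : (j <= 2 * k)%N -> (rev w)`_j = w`_(2 * k - j).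
Proof. by move=> jk; rewrite nth_rev size_w //; congr w`_(_); lia. Qed.

Lemma hcorner_ul_rev m :
  (m <= k)%N -> hcorner_ul (rev w) m = revmx (hcorner_lr k w m).
Proof.
move=> mk; apply/matrixP => a b; have := ltn_ord a; have := ltn_ord b => ltb lta.
by rewrite !mxE /= nth_rev_mirror; [congr w`_(_) | ]; lia.
Qed.

Lemma posdef_hcorner_ul_rev m :
  (m <= k)%N -> posdef (hcorner_ul (rev w) m) <-> posdef (hcorner_lr k w m).
Proof. by move=> mk; rewrite hcorner_ul_rev ?posdef_revmxE. Qed.

Lemma phi_rev n :
  hrank k (rev w) = n.+1 -> (n < k)%N -> posdef (hcorner_lr k w n) ->
  forall i, (i <= n)%N -> phi k (rev w) i = psi k w (n - i).
Proof.
move=> r'_eq nk P i i_le; rewrite /phi /psi r'_eq /= ltnS i_le ltnS leq_subr.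
set M := hcorner_lr k w n; set b := \col_l w`_((2 * k).+1 + l - 2 * n.+1).
have rev_b : \col_l (rev w)`_(n.+1 + l) = \col_l (M *m (invmx M *m b)) (rev_ord l) 0.
  rewrite mulKVmx ?posdef_unitmx //; apply/matrixP => a z.
  by rewrite !mxE /= nth_rev_mirror; [congr w`_(_) | ]; have := ltn_ord a; lia.
rewrite hcorner_ul_rev ?(ltnW nk) // rev_b -mul_revmx_rev mulKmx.
  by rewrite mxE; congr (_ _ 0); apply: val_inj; rewrite /= !inordK; lia.
by apply/posdef_unitmx/posdef_revmx.
Qed.

Lemma prg_rev_nrg : (hrank k (rev w) <= k)%N -> prg k (rev w) <-> nrg k w.
Proof.
rewrite /prg /nrg /=; case r'_eq: (hrank k (rev w)) => [|n] nk; first by split; case.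
have posdef_corners := posdef_hcorner_ul_rev (ltnW nk).
have sum_rev j : posdef (hcorner_lr k w n) -> (j <= 2 * k - n.+1)%N ->
    \sum_(i < n.+1) phi k (rev w) i * (rev w)`_(j + i) =
    \sum_(i < n.+1) psi k w i * w`_((2 * k).+1 - n.+1 - j + i).
  move=> P jk; rewrite (reindex_inj rev_ord_inj); apply: eq_bigr => i _ /=.
  have := ltn_ord i => ltin; rewrite (phi_rev r'_eq nk P) ?subKn; try lia.
  by rewrite nth_rev_mirror; [congr (_ * w`_ _) | ]; lia.
split=> -[_ [P /(_ nk) rec]].
all: split; [done | split; [by apply/posdef_corners | move=> _ j jk]].
- rewrite -sum_rev; [|by apply/posdef_corners | done].
  rewrite (_ : 2 * k - n.+1 - j = 2 * k - (j + n.+1))%N; last by lia.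
  rewrite -nth_rev_mirror ?rec; try lia.
  by apply: eq_bigr => i _; congr (_ * (rev w)`_ _); lia.
- rewrite sum_rev // ?nth_rev_mirror; try lia.
  by rewrite (_ : 2 * k - j = 2 * k - n.+1 - (j - n.+1))%N ?rec //; lia.
Qed.

Lemma lin_rec_rev n (c : nat -> R) :
  c 0%N != 0 -> lin_rec w n.+1 c n.+1 (2 * k) ->
  lin_rec (rev w) n.+1
    (fun i => if i == 0%N then (c 0%N)^-1 else - (c (n.+1 - i)%N / c 0%N))
    n.+1 (2 * k).
Proof.
move=> c0 rec j /andP[nj jk].
rewrite nth_rev_mirror // big_ord_recl /= nth_rev_mirror; last by lia.
rewrite (_ : 2 * k - (j - n.+1 + 0) = 2 * k - j + n.+1)%N; last by lia.
rewrite (rec (2 * k - j + n.+1)%N); last by lia.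
rewrite big_ord_recl /=.
set S := \sum_(i < n) c _ * _.
have -> : \sum_(i < n) - (c (n.+1 - bump 0 i)%N / c 0%N) *
                          (rev w)`_(j - n.+1 + bump 0 i) = - ((c 0%N)^-1 * S).
  rewrite /S mulr_sumr -sumrN (reindex_inj rev_ord_inj); apply: eq_bigr => i _ /=.
  have := ltn_ord i; rewrite /bump !leq0n !add1n => lti.
  rewrite nth_rev_mirror; last by lia.
  rewrite (_ : n.+1 - (n - i.+1).+1 = i.+1)%N; last by lia.
  rewrite (_ : 2 * k - (j - n.+1 + (n - i.+1).+1) = 2 * k - j + n.+1 - n.+1 + i.+1)%N;
    last by lia.
  by rewrite mulNr mulrAC mulrC.
by rewrite mulrDr mulKf // addrK; congr w`_(_); lia.
Qed.

End Reversal.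

Section Equivalence.
Variable R : realFieldType.
Implicit Types (v : seq R) (k : nat).

Lemma nrg_hrank_rev_le v k :
  (hrank k v <= k)%N -> nrg k v -> (hrank k (rev v) <= k)%N.
Proof.
move=> rk [_ [P _]]; rewrite -ltnS ltn_neqAle hrank_leqS andbT.
have U : hankel k v \notin unitmx by apply: contraTN rk => U; rewrite /hrank U ltnn.
apply: contra U => /eqP r'_eq; move: P; rewrite r'_eq /=.
by rewrite hcorner_lr_block // subnn muln0 -hcorner_ul_block => /posdef_unitmx.
Qed.

Lemma lin_rec_not_posdef_lr v k n q (c : nat -> R) :
  (n < k)%N -> (q <= n)%N -> lin_rec v q c q.+1 (2 * k) ->
  ~ posdef (hcorner_lr k v n).
Proof.
move=> nk qn rec /posdef_unitmx; rewrite hcorner_lr_block ?(ltnW nk) //.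
by apply/negP/(lin_rec_block_nonunit qn) => j /andP[j1 j2]; apply: rec; lia.
Qed.

Lemma prg_phi0_nrg v k :
  size v = (2 * k).+1 -> (hrank k v <= k)%N -> prg k v -> phi k v 0 != 0 ->
  [/\ hrank k (rev v) = hrank k v, nrg k v &
      forall i, (i < hrank k v)%N -> psi k v i =
        if i == (hrank k v).-1 then (phi k v 0)^-1
        else - (phi k v i.+1 / phi k v 0)].
Proof.
move=> sv rk [r_gt0 [P rec]] phi0.
case r_eq: (hrank k v) rk r_gt0 P rec => [|n] // nk _ P /(_ nk) rec.
have Plr : posdef (hcorner_lr k v n).
  rewrite hcorner_lr_block ?(ltnW nk) //.
  by apply: (hankel_block_posdef rec) => //; lia.
have Pu := (posdef_hcorner_ul_rev sv (ltnW nk)).2 Plr.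
have [r'_eq prg_rev phi_rev_eq] :=
  prg_lin_rec (nk : (0 < n.+1 <= k)%N) Pu (lin_rec_rev sv phi0 rec).
split=> [//||i ilt]; first by apply/(prg_rev_nrg sv); rewrite ?r'_eq.
have := phi_rev sv r'_eq nk Plr (leq_subr i n); rewrite subKn // => <-.
rewrite phi_rev_eq ?ltnS ?leq_subr // subn_eq0 /=.
case: (eqVneq i n) => [->|i_neq_n]; first by rewrite leqnn.
by rewrite leqNgt ltn_neqAle i_neq_n -ltnS ilt /=; congr (- (phi _ _ _ / _)); lia.
Qed.

Lemma rg_phi0_neq0 v k :
  size v = (2 * k).+1 -> (hrank k v <= k)%N -> rg k v -> phi k v 0 != 0.
Proof.
move=> sv rk [[r_gt0 [P /(_ rk) rec]] nrg_v].
have r'k := nrg_hrank_rev_le rk nrg_v.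
have svr : size (rev v) = (2 * k).+1 by rewrite size_rev.
have [_ [_ /(_ r'k) rec']] := (prg_rev_nrg sv r'k).2 nrg_v.
have [_ [Plr _]] := nrg_v.
have r_le : (hrank k v <= hrank k (rev v))%N.
  rewrite leqNgt; apply/negP => r'_lt_r.
  apply: (@lin_rec_not_posdef_lr (rev v) k (hrank k v).-1 (hrank k (rev v))
                                 (phi k (rev v))).
  - by lia.
  - by lia.
  - by move=> j /andP[j1 j2]; apply: rec'; lia.
  - by apply/(posdef_hcorner_ul_rev svr); rewrite ?revK //; lia.
apply/eqP => phi0.
case r_eq: (hrank k v) r_gt0 rec r_le => [|n] // _ rec r_le.
apply: (@lin_rec_not_posdef_lr v k _ n (fun i => phi k v i.+1) _ _ _ Plr).
- by lia.
- by lia.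
move=> j /andP[j1 j2]; rewrite rec ?big_ord_recl /= ?phi0 ?mul0r ?add0r; last by lia.
by apply: eq_bigr => i _; rewrite /bump leq0n add1n; congr (_ * v`_ _); lia.
Qed.

Lemma nrg_psi_prg v k :
  size v = (2 * k).+1 -> (hrank k v <= k)%N -> nrg k v ->
  psi k v (hrank k (rev v)).-1 != 0 -> prg k v.
Proof.
move=> sv rk nrg_v psi0; have r'k := nrg_hrank_rev_le rk nrg_v.
have svr : size (rev v) = (2 * k).+1 by rewrite size_rev.
have prg_rev := (prg_rev_nrg sv r'k).2 nrg_v.
have [_ [Plr _]] := nrg_v.
case r'_eq: (hrank k (rev v)) r'k Plr psi0 => [|n] nk Plr psi0.
  by case: nrg_v; rewrite r'_eq.
have phi0 : phi k (rev v) 0 != 0 by rewrite (phi_rev sv r'_eq nk Plr) ?subn0.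
have [_ nrg_rev _] := prg_phi0_nrg svr (leq_trans (eq_leq r'_eq) nk) prg_rev phi0.
by move: nrg_rev; rewrite -(prg_rev_nrg svr) revK.
Qed.

End Equivalence.

Unset Implicit Arguments.

Theorem proposition2p3 (R : realFieldType) (k : nat) (v : (2 * k).+1.-tuple R) :
  (hrank k v < k.+1)%N ->
  [<-> prg k v /\ phi k v 0 != 0;
       nrg k v /\ psi k v (hrank k (rev v)).-1 != 0;
       rg k v;
       rg k v /\ hrank k v = hrank k (rev v) /\ phi k v 0 != 0 /\
         (forall i : nat, (i < (hrank k v).-1)%N ->
            psi k v i = - (phi k v i.+1 / phi k v 0)) /\
         psi k v (hrank k v).-1 = (phi k v 0)^-1].
Proof.
rewrite ltnS => rk; have sv : size v = (2 * k).+1 := size_tuple v.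
tfae=> [[prg_v phi0] | [nrg_v psi0] | rg_v | [rg_v [_ [phi0 _]]]].
- have [r'_eq nrg_v psi_eq] := prg_phi0_nrg sv rk prg_v phi0.
  have [r_gt0 _] := prg_v.
  by split=> //; rewrite r'_eq psi_eq ?prednK // eqxx invr_neq0.
- by split=> //; apply: nrg_psi_prg.
- have phi0 := rg_phi0_neq0 sv rk rg_v.
  have [r'_eq _ psi_eq] := prg_phi0_nrg sv rk rg_v.1 phi0.
  have [[r_gt0 _] _] := rg_v.
  split=> //; split; first by rewrite r'_eq.
  split=> //; split=> [i ilt|]; last by rewrite psi_eq ?eqxx // prednK.
  by rewrite psi_eq ?(ltn_eqF ilt) // (leq_trans ilt (leq_pred _)).
- by case: rg_v.
Qed.
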